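(* Let $n\geq 1$ and $k\ge 2$, and let $u$ be a word over $\Sigma_k$ of length at most $n$. Then $B_k(u,n)$ can be computed in $O(n^2)$ time using $O(n)$ space, under the unit-cost RAM model.
   Context: $\Sigma_k=\{1,2,\ldots,k\}$. A border of a word $w$ is a word that is both a non-empty proper prefix and a non-empty proper suffix of $w$; $w$ is bordered if it has a border. $B_k(u,n)$ denotes the number of length-$n$ bordered words over $\Sigma_k$ having $u$ as a prefix. Unit-cost RAM model: integer variables use constant space and integer arithmetic operations take constant time. *)

From Stdlib Require Import ZArith.
From mathcomp Require Import all_boot.

Set Implicit Arguments.
Unset Strict Implicit.
Unset Printing Implicit Defensive.

(* Words over Sigma_k = {1,...,k}, represented as seq nat.             *)

Definition is_border (v w : seq nat) : bool :=
  [&& 0 < size v, size v < size w, prefix v w & suffix v w].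

(* w is bordered iff it has a border; a border is determined by its length. *)
Definition bordered (w : seq nat) : bool :=
  has (fun m => is_border (take m w) w) (iota 1 (size w)).

Definition word_of (k n : nat) (t : n.-tuple 'I_k) : seq nat :=
  map (fun i : 'I_k => (nat_of_ord i).+1) t.

Definition B (k : nat) (u : seq nat) (n : nat) : nat :=
  #|[pred t : n.-tuple 'I_k | prefix u (word_of t) && bordered (word_of t)]|.

(* Each executed instruction costs 1 time unit; every arithmetic       *)
(* operation on integers is a single instruction.                      *)
(* Space used = 1 + max |address| of any register ever accessed        *)
(* (input registers included).                                         *)

Inductive instr : Type :=
  | IConst (d : nat) (c : Z)            (* R[d] := c *)
  | IAdd (d a b : nat)                  (* R[d] := R[a] + R[b] *)
  | ISub (d a b : nat)                  (* R[d] := R[a] - R[b] *)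
  | IMul (d a b : nat)                  (* R[d] := R[a] * R[b] *)
  | IDiv (d a b : nat)                  (* R[d] := R[a] / R[b] (Z.div) *)
  | IMod (d a b : nat)                  (* R[d] := R[a] mod R[b] (Z.modulo) *)
  | ILoad (d a : nat)                   (* R[d] := R[R[a]] *)
  | IStore (a s : nat)                  (* R[R[a]] := R[s] *)
  | IJz (r : nat) (l : nat)             (* if R[r] = 0 then goto l *)
  | IJlt (a b : nat) (l : nat)          (* if R[a] < R[b] then goto l *)
  | IJmp (l : nat)                      (* goto l *)
  | IHalt.

Definition program := seq instr.

Record config := Config { cpc : nat; cmem : Z -> Z; cused : nat }.

Definition upd (m : Z -> Z) (a : Z) (v : Z) : Z -> Z :=
  fun x => if Z.eqb x a then v else m x.

Definition sz (a : Z) : nat := (Z.abs_nat a).+1.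

Definition touch (u : nat) (addrs : seq Z) : nat :=
  foldr (fun a acc => maxn (sz a) acc) u addrs.

(* One step; None means the machine has halted (Halt or pc out of range). *)
Definition step (P : program) (c : config) : option config :=
  let m := cmem c in
  let nx := (cpc c).+1 in
  let R (i : nat) := m (Z.of_nat i) in
  let arith d a b (f : Z -> Z -> Z) :=
    Some (Config nx (upd m (Z.of_nat d) (f (R a) (R b)))
                 (touch (cused c) [:: Z.of_nat d; Z.of_nat a; Z.of_nat b])) in
  if cpc c < size P then
  match nth IHalt P (cpc c) with
  | IConst d v => Some (Config nx (upd m (Z.of_nat d) v) (touch (cused c) [:: Z.of_nat d]))
  | IAdd d a b => arith d a b Z.add
  | ISub d a b => arith d a b Z.sub
  | IMul d a b => arith d a b Z.mul
  | IDiv d a b => arith d a b Z.div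
  | IMod d a b => arith d a b Z.modulo
  | ILoad d a => Some (Config nx (upd m (Z.of_nat d) (m (R a)))
                        (touch (cused c) [:: Z.of_nat d; Z.of_nat a; R a]))
  | IStore a s => Some (Config nx (upd m (R a) (R s))
                         (touch (cused c) [:: Z.of_nat a; Z.of_nat s; R a]))
  | IJz r l => Some (Config (if Z.eqb (R r) 0 then l else nx) m
                       (touch (cused c) [:: Z.of_nat r]))
  | IJlt a b l => Some (Config (if Z.ltb (R a) (R b) then l else nx) m
                          (touch (cused c) [:: Z.of_nat a; Z.of_nat b]))
  | IJmp l => Some (Config l m (cused c))
  | IHalt => None
  end
  else None.

(* run P t c = Some c' iff the machine started in c halts within t steps
   (counting the final halting check), ending in configuration c'. *)
Fixpoint run (P : program) (t : nat) (c : config) : option config :=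
  match t with
  | 0 => None
  | t'.+1 => match step P c with
             | None => Some c
             | Some c' => run P t' c'
             end
  end.

(* Input encoding: R[0] = k, R[1] = n, R[2] = |u|, R[3+i] = u_i (i < |u|),
   all other registers 0. The input registers count as used space. *)
Definition init_mem (k n : nat) (u : seq nat) : Z -> Z :=
  fun x =>
    if Z.eqb x 0 then Z.of_nat k
    else if Z.eqb x 1 then Z.of_nat n
    else if Z.eqb x 2 then Z.of_nat (size u)
    else if Z.leb 3 x && Z.ltb x (3 + Z.of_nat (size u)) then
      Z.of_nat (nth 0 u (Z.to_nat (x - 3)))
    else 0%Z.

Definition init_config (k n : nat) (u : seq nat) : config :=
  Config 0 (init_mem k n u) (size u + 3).

(* Every bordered word has a unique shortest border; it is unbordered and at most half as long
   as the word.  Classifying the length-m words with prefix u[..m] by the length j <= m/2 of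
   their shortest border expresses B_k(u[..m], m) through the numbers U(j) of unbordered
   length-j words with prefix u[..j], each multiplied by a power of k or by a 0/1 factor that
   is read off the longest common prefix of u and its suffix u[m-j..]; conversely
   U(m) = k^(m - min(m,|u|)) - B_k(u[..m], m).  A RAM program tabulating the powers of k,
   these longest common prefixes and U(1), ..., U(n) therefore computes B_k(u,n) with O(n)
   registers in O(n^2) steps. *)

From Stdlib Require Import ZArith Lia.
From mathcomp Require Import all_boot zify.

Set Implicit Arguments.
Unset Strict Implicit.
Unset Printing Implicit Defensive.

Definition word_over (k : nat) (w : seq nat) : bool :=
  all (fun a => (1 <= a) && (a <= k)) w.

Lemma word_over_take k j w : word_over k w -> word_over k (take j w).
Proof. by rewrite /word_over -{1}(cat_take_drop j w) all_cat => /andP[]. Qed.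

Lemma word_over_drop k j w : word_over k w -> word_over k (drop j w).
Proof. by rewrite /word_over -{1}(cat_take_drop j w) all_cat => /andP[]. Qed.

Fixpoint words (k n : nat) : seq (seq nat) :=
  if n is n'.+1 then [seq a :: w | a <- iota 1 k, w <- words k n'] else [:: [::]].

Lemma mem_words k n w : (w \in words k n) = (size w == n) && word_over k w.
Proof.
elim: n w => [|n IHn] [|a w] //=; first by apply/allpairsP => -[[b v] [_ _]].
apply/allpairsP/idP => [[[b v] /= [Hb Hv [-> ->]]]|/andP[Hs /andP[Ha Hw]]].
  move: Hv Hb; rewrite IHn mem_iota => /andP[/eqP -> ->].
  by rewrite eqxx andbT; lia.
by exists (a, w); rewrite mem_iota IHn -eqSS Hs Hw; split => //; lia.
Qed.

Lemma uniq_words k n : uniq (words k n).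
Proof.
elim: n => [|n IHn] //=; apply: allpairs_uniq => //; first exact: iota_uniq.
by move=> [a1 w1] [a2 w2] _ _ /= [-> ->].
Qed.

Lemma size_words k n : size (words k n) = k ^ n.
Proof. by elim: n => [|n IHn] //=; rewrite size_allpairs size_iota IHn expnS. Qed.

Section SumWords.
Variable k : nat.
Implicit Types (F : seq nat -> nat) (p q s t v : seq nat).

Lemma sum_words_cat F a b :
  \sum_(w <- words k (a + b)) F w =
  \sum_(x <- words k a) \sum_(y <- words k b) F (x ++ y).
Proof.
elim: a F => [|a IHa] F /=; first by rewrite big_seq1.
by rewrite !big_allpairs_dep; apply: eq_bigr => c _; rewrite IHa.
Qed.

Lemma sum_words_const n c : \sum_(w <- words k n) c = c * k ^ n.
Proof. by rewrite big_const_seq count_predT size_words iter_addn_0 mulnC. Qed.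

Lemma sum_words_eq F n v : v \in words k n ->
  \sum_(w <- words k n) (v == w) * F w = F v.
Proof.
move=> wv; rewrite (bigD1_seq v) //= ?uniq_words // eqxx mul1n big1 ?addn0 //.
by move=> w /negbTE; rewrite eq_sym => ->.
Qed.

Lemma prefix_cat p s t : prefix p (s ++ t) =
  if size p <= size s then prefix p s
  else (take (size s) p == s) && prefix (drop (size s) p) t.
Proof.
elim: s p => [|a s IHs] [|b p] //=; first by case: t.
by rewrite IHs ltnS eqseq_cons; case: ifP => _; rewrite ?andbA.
Qed.

Lemma sum_words_prefix_cat q v a : word_over k q ->
  \sum_(x <- words k a) (prefix q (x ++ v) : nat) =
  if size q <= a then k ^ (a - size q) else prefix (drop a q) v.
Proof.
move=> kq; case: leqP => [qa|aq].
  rewrite -{1}(subnKC qa) sum_words_cat.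
  rewrite -[RHS](@sum_words_eq (fun _ => k ^ (a - size q)) (size q) q); last first.
    by rewrite mem_words eqxx.
  apply: eq_big_seq => y; rewrite mem_words => /andP[/eqP qy _].
  under eq_bigr do rewrite -catA prefixE take_size_cat // eq_sym.
  by rewrite sum_words_const.
rewrite -[RHS](@sum_words_eq (fun _ => (prefix (drop a q) v : nat)) a (take a q)); last first.
  by rewrite mem_words size_takel ?eqxx ?word_over_take // ltnW.
apply: eq_big_seq => x; rewrite mem_words => /andP[/eqP xa _].
by rewrite prefix_cat xa leqNgt aq mulnb.
Qed.

Lemma sum_words_prefix q a : word_over k q -> size q <= a ->
  \sum_(w <- words k a) (prefix q w : nat) = k ^ (a - size q).
Proof.
move=> kq qa; have := sum_words_prefix_cat [::] a kq; rewrite qa => <-.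
by apply: eq_bigr => w _; rewrite cats0.
Qed.

End SumWords.

Definition has_border (m : nat) (w : seq nat) : bool :=
  (0 < m < size w) && (take m w == drop (size w - m) w).

Lemma has_borderP m w :
  reflect (0 < m < size w /\ forall i, i < m -> nth 0 w i = nth 0 w (i + (size w - m)))
          (has_border m w).
Proof.
apply: (iffP andP) => -[mw E]; split => //.
  by move=> i im; move/eqP/(congr1 (nth 0 ^~ i)): E; rewrite nth_take // nth_drop addnC.
apply/eqP/(@eq_from_nth _ 0) => [|i]; first by rewrite size_take_min size_drop; lia.
rewrite size_take_min => im; rewrite nth_take ?nth_drop; last lia.
by rewrite E; [congr nth|]; lia.
Qed.

Lemma bordered_has_border w : bordered w = has (has_border ^~ w) (iota 1 (size w)).
Proof.
apply: eq_in_has => m; rewrite mem_iota => m_range.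
rewrite /is_border /has_border prefix_take suffixE size_take_min eq_sym.
by case: (ltnP m (size w)) => mw; rewrite ?mw ?ltnn /= ?andbT ?andbF.
Qed.

Lemma borderedP w : reflect (exists m, has_border m w) (bordered w).
Proof.
rewrite bordered_has_border; apply: (iffP hasP) => [[m _ wm]|[m wm]]; exists m => //.
by case/has_borderP: wm => mw _; rewrite mem_iota; lia.
Qed.

Lemma has_border_trans m b w : has_border m w -> has_border b (take m w) -> has_border b w.
Proof.
move=> /has_borderP[mw Em] /has_borderP[]; rewrite size_take_min => bm Eb.
apply/has_borderP; split => [|i ib]; first lia.
rewrite -(@nth_take m); last lia.
rewrite Eb // nth_take; last lia.
by rewrite Em; [congr nth|]; lia.
Qed.

Lemma has_border_take i j w : has_border i w -> has_border j w -> i < j ->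
  has_border i (take j w).
Proof.
move=> /has_borderP[iw Ei] /has_borderP[jw Ej] ij.
apply/has_borderP; have -> : size (take j w) = j by rewrite size_takel //; lia.
split => [|t ti]; first lia.
rewrite !nth_take; try lia.
by rewrite Ei // (Ej (t + (j - i))); [congr nth|]; lia.
Qed.

Definition unbordered_border (j : nat) (w : seq nat) : bool :=
  has_border j w && ~~ bordered (take j w).

Lemma unbordered_border_half j w : unbordered_border j w -> 2 * j <= size w.
Proof.
case/andP=> wj; apply: contraNT; rewrite -ltnNge => w2j.
(* The prefix and suffix copies of the border overlap, and the overlap is a border of it. *)
apply/borderedP; exists (2 * j - size w).
move/has_borderP: wj => [jw Ej]; apply/has_borderP.
rewrite size_take_min; split => [|i ij]; first lia.
rewrite !nth_take; try lia.
by rewrite Ej; [congr nth|]; lia.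
Qed.

Lemma unbordered_border_uniq i j w :
  unbordered_border i w -> unbordered_border j w -> i = j.
Proof.
wlog ij : i j / i <= j => [hwlog wi wj|/andP[wi _] /andP[wj ubj]].
  by case: (leqP i j) => [|/ltnW] ij; [exact: hwlog|symmetry; exact: hwlog].
apply/eqP; rewrite eqn_leq ij /= leqNgt; apply: contraNN ubj => {}ij.
by apply/borderedP; exists i; apply: has_border_take.
Qed.

Lemma bordered_unbordered_border w : bordered w -> exists j, unbordered_border j w.
Proof.
move/borderedP=> w_bd; case: (ex_minnP w_bd) => m wm m_min.
exists m; rewrite /unbordered_border wm; apply/negP => /borderedP[b wmb].
have := m_min _ (has_border_trans wm wmb).
by case/has_borderP: wmb; rewrite size_take_min; lia.
Qed.

Lemma bordered_sum_unbordered_border w :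
  bordered w = \sum_(1 <= j < (size w)./2.+1) unbordered_border j w :> nat.
Proof.
have [w_bd|w_ubd] := boolP (bordered w).
  have [j wj] := bordered_unbordered_border w_bd.
  have j_range : j \in index_iota 1 (size w)./2.+1.
    have := unbordered_border_half wj; case/andP: wj => /has_borderP[jw _] _.
    by rewrite mem_index_iota; lia.
  rewrite (bigD1_seq j) ?iota_uniq //= wj big1_seq // => i /andP[ij _].
  case: (boolP (unbordered_border i w)) => // wi.
  by rewrite (unbordered_border_uniq wi wj) eqxx in ij.
rewrite big1_seq // => j _; case: (boolP (unbordered_border j w)) => // /andP[wj _].
by case/negP: w_ubd; apply/borderedP; exists j.
Qed.

Section Counting.
Variable k : nat.
Implicit Types (p v : seq nat).

Definition nbordered p n := \sum_(w <- words k n) (prefix p w && bordered w : nat).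
Definition nunbordered p n := \sum_(w <- words k n) (prefix p w && ~~ bordered w : nat).

Lemma nbordered_add_nunbordered p n : word_over k p -> size p <= n ->
  nbordered p n + nunbordered p n = k ^ (n - size p).
Proof.
move=> kp pn; rewrite -sum_words_prefix // -big_split /=.
by apply: eq_bigr => w _; case: prefix; case: bordered.
Qed.

Lemma nbordered_sum_unbordered_border p n : nbordered p n =
  \sum_(1 <= j < n./2.+1) \sum_(w <- words k n) (prefix p w && unbordered_border j w : nat).
Proof.
rewrite /nbordered exchange_big /=; apply: eq_big_seq => w.
rewrite mem_words => /andP[/eqP <- _].
rewrite -mulnb bordered_sum_unbordered_border big_distrr /=.
by apply: eq_bigr => j _; rewrite mulnb.
Qed.

Lemma sum_unbordered_border_split p n j : 0 < j -> 2 * j <= n ->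
  \sum_(w <- words k n) (prefix p w && unbordered_border j w : nat) =
  \sum_(v <- words k j) \sum_(x <- words k (n - 2 * j))
     (prefix p (v ++ x ++ v) && ~~ bordered v : nat).
Proof.
move=> j_gt0 jn; rewrite {1}(_ : n = j + (n - 2 * j + j)); last lia.
rewrite sum_words_cat; apply: eq_big_seq => v; rewrite mem_words => /andP[/eqP vj kv].
rewrite sum_words_cat; apply: eq_big_seq => x; rewrite mem_words => /andP[/eqP xn _].
rewrite -[RHS](@sum_words_eq k (fun v' => prefix p (v ++ x ++ v') && ~~ bordered v : nat) j v);
  last by rewrite mem_words vj eqxx kv.
apply: eq_big_seq => v'; rewrite mem_words => /andP[/eqP v'j _].
rewrite /unbordered_border /has_border take_size_cat // !size_cat.
rewrite (_ : size v + (size x + size v') - j = size (v ++ x)); last by rewrite size_cat; lia.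
rewrite catA drop_size_cat // -catA; have -> : 0 < j < size v + (size x + size v') by lia.
by case: eqP => [<-|_]; case: prefix; case: bordered.
Qed.

Lemma sum_unbordered_borderE p n j : word_over k p -> 0 < j -> 2 * j <= n ->
  \sum_(w <- words k n) (prefix p w && unbordered_border j w : nat) =
  if size p <= j then nunbordered p j * k ^ (n - 2 * j)
  else ~~ bordered (take j p) *
       (if size p <= n - j then k ^ (n - j - size p) else prefix (drop (n - j) p) (take j p)).
Proof.
move=> kp j_gt0 jn; rewrite sum_unbordered_border_split //; case: leqP => [pj|jp].
  rewrite /nunbordered big_distrl; apply: eq_big_seq => v.
  rewrite mem_words => /andP[/eqP vj _].
  under eq_bigr do rewrite prefix_cat vj pj.
  by rewrite sum_words_const.
pose F v := ~~ bordered v * \sum_(x <- words k (n - 2 * j)) (prefix (drop j p) (x ++ v) : nat).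
transitivity (\sum_(v <- words k j) (take j p == v) * F v).
  apply: eq_big_seq => v; rewrite mem_words => /andP[/eqP vj _].
  rewrite /F big_distrr big_distrr; apply: eq_bigr => x _ /=.
  by rewrite prefix_cat vj leqNgt jp /= !mulnb -andbA; congr (_ && _); rewrite andbC.
rewrite sum_words_eq; last by rewrite mem_words size_takel ?word_over_take ?eqxx // ltnW.
rewrite /F sum_words_prefix_cat ?word_over_drop // size_drop drop_drop.
have -> : (size p - j <= n - 2 * j) = (size p <= n - j) by lia.
by rewrite (_ : n - 2 * j - (size p - j) = n - j - size p) 1?(_ : n - 2 * j + j = n - j); lia.
Qed.

End Counting.

Fixpoint lcp (a b : seq nat) : nat :=
  if a is x :: a' then
    if b is y :: b' then (if x == y then (lcp a' b').+1 else 0) else 0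
  else 0.

Lemma lcp_leq_size a b : lcp a b <= size b.
Proof.
elim: a b => [|x a IHa] [|y b] //=.
by case: eqP => // _; rewrite ltnS.
Qed.

Lemma lcp_geE a b c : c <= size a -> c <= size b -> (c <= lcp a b) = (take c a == take c b).
Proof.
elim: a b c => [|x a IHa] [|y b] [|c] //= ca cb.
by rewrite eqseq_cons -IHa //; case: eqP.
Qed.

Lemma ltn_lcp a b z : z <= lcp a b -> z < size a -> z < size b ->
  (z < lcp a b) = (nth 0 a z == nth 0 b z).
Proof.
move=> zab za zb; rewrite lcp_geE // !(take_nth 0) // eqseq_rcons -lcp_geE ?zab //; lia.
Qed.

Section TruncatedPrefix.
Variables (k : nat) (u : seq nat).
Hypothesis ku : word_over k u.

Definition U m := nunbordered k (take m u) m.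

(* The number of length-m words with prefix [take m u] whose shortest border has length j,
   for 0 < j <= m/2 (see sum_unbordered_borderE). *)
Definition nshortest_border m j :=
  let l := minn m (size u) in
  U j * (if l <= j then k ^ (m - 2 * j)
         else if l <= m - j then k ^ (m - j - l)
         else l - (m - j) <= lcp u (drop (m - j) u)).

Lemma U_full j : j <= size u -> U j = ~~ bordered (take j u).
Proof.
move=> ju; have kuj := word_over_take j ku.
have uj : size (take j u) = j by rewrite size_takel.
rewrite /U -[RHS](@sum_words_eq k (fun w => ~~ bordered w : nat) j); last first.
  by rewrite mem_words uj eqxx.
apply: eq_big_seq => w; rewrite mem_words => /andP[/eqP wj _].
by rewrite prefixE uj take_oversize ?wj // eq_sym mulnb.
Qed.

Lemma prefix_drop_take_lcp m j : j < minn m (size u) -> m - j < minn m (size u) ->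
  prefix (drop (m - j) (take m u)) (take j u) =
  (minn m (size u) - (m - j) <= lcp u (drop (m - j) u)).
Proof.
move=> jl mjl; set c := minn m (size u) - (m - j).
have sc : size (drop (m - j) (take m u)) = c by rewrite size_drop size_take_min.
rewrite lcp_geE ?size_drop; try lia.
rewrite prefixE sc take_takel; last lia.
have -> : drop (m - j) (take m u) = take c (drop (m - j) u).
  apply: (@eq_from_nth _ 0) => [|i]; rewrite size_drop !size_take_min ?size_drop; first lia.
  by move=> ic; rewrite nth_drop !nth_take ?nth_drop //; lia.
by rewrite eq_sym.
Qed.

Lemma nbordered_take_add_U m : nbordered k (take m u) m + U m = k ^ (m - minn m (size u)).
Proof.
by rewrite /U nbordered_add_nunbordered ?word_over_take ?size_take_min // geq_minl.
Qed.

Lemma nbordered_take_rec m : nbordered k (take m u) m =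
  \sum_(1 <= j < m./2.+1) nshortest_border m j.
Proof.
rewrite nbordered_sum_unbordered_border; apply: eq_big_seq => j; rewrite mem_index_iota => j_range.
rewrite sum_unbordered_borderE ?word_over_take; try lia.
rewrite size_take_min /nshortest_border /=; case: leqP => [lj|jl].
  by rewrite /U !take_oversize //; lia.
rewrite take_takel ?U_full; try lia.
by case: leqP => // ?; rewrite prefix_drop_take_lcp.
Qed.

End TruncatedPrefix.

Lemma word_of_inj k n : injective (@word_of k n).
Proof. by move=> t1 t2 /inj_map E; apply/val_inj/E => a b [] /val_inj. Qed.

Lemma perm_words_of k n : 0 < k ->
  perm_eq (map (@word_of k n) (enum {: n.-tuple 'I_k})) (words k n).
Proof.
case: k => // k _; apply: uniq_perm; [|exact: uniq_words|move=> w].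
  by rewrite map_inj_uniq ?enum_uniq //; exact: word_of_inj.
rewrite mem_words; apply/mapP/idP => [[t _ ->]|/andP[/eqP wn kw]].
  rewrite size_map size_tuple eqxx; apply/allP => a /mapP[i _ ->] /=.
  by rewrite ltn_ord.
have wn' : size (map (fun a => inord a.-1 : 'I_k.+1) w) == n by rewrite size_map wn.
exists (Tuple wn'); first by rewrite mem_enum.
rewrite /word_of /= -map_comp -[LHS]map_id; apply/eq_in_map => a wa /=.
by move/allP: kw => /(_ a wa) ka; rewrite inordK; lia.
Qed.

Lemma B_nbordered k u n : 0 < k -> B k u n = nbordered k u n.
Proof.
move=> k_gt0; rewrite /B cardE /enum_mem size_filter.
rewrite (@eq_count _ _ (preim (@word_of k n) (fun w => prefix u w && bordered w))) //.
rewrite -count_map -enumT (permP (perm_words_of n k_gt0)).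
by rewrite /nbordered -sum1_count big_mkcond.
Qed.

Section Execution.
Variable P : program.

Fixpoint exec (t : nat) (c : config) : option config :=
  if t is t'.+1 then (if step P c is Some c' then exec t' c' else None) else Some c.

Definition reaches (c : config) (T : nat) (Q : config -> Prop) :=
  exists t c', [/\ t <= T, exec t c = Some c' & Q c'].

Lemma reaches_now c T (Q : config -> Prop) : Q c -> reaches c T Q.
Proof. by exists 0, c. Qed.

Lemma reaches_step c c' T Q : step P c = Some c' -> reaches c' T Q -> reaches c T.+1 Q.
Proof. by move=> Pc [t [c'' [tT ex Qc]]]; exists t.+1, c''; rewrite /= Pc. Qed.

Lemma reaches_mono c T T' (Q Q' : config -> Prop) : T <= T' -> (forall c, Q c -> Q' c) ->
  reaches c T Q -> reaches c T' Q'.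
Proof. by move=> TT' QQ' [t [c' [tT ex Qc]]]; exists t, c'; split; [lia | | apply: QQ']. Qed.

Lemma reaches_le c T T' Q : T <= T' -> reaches c T Q -> reaches c T' Q.
Proof. by move=> TT'; apply: reaches_mono. Qed.

Lemma exec_add a b c c1 : exec a c = Some c1 -> exec (a + b) c = exec b c1.
Proof. by elim: a c => [|a IHa] c /=; [case=> -> | case: (step P c) => // c'; apply: IHa]. Qed.

Lemma reaches_seq c T1 T2 (Q1 Q2 : config -> Prop) :
  reaches c T1 Q1 -> (forall c', Q1 c' -> reaches c' T2 Q2) -> reaches c (T1 + T2) Q2.
Proof.
move=> [t1 [c1 [tT1 ex1 Qc1]]] /(_ c1 Qc1) [t2 [c2 [tT2 ex2 Qc2]]].
by exists (t1 + t2), c2; rewrite (exec_add _ ex1); split => //; lia.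
Qed.

Lemma reaches_loop (I : nat -> config -> Prop) (Q : config -> Prop) b e :
  (forall i c, I i c -> reaches c e Q \/ exists2 i', i = i'.+1 & reaches c b (I i')) ->
  forall i c, I i c -> reaches c (i * b + e) Q.
Proof.
move=> body; elim=> [|i IHi] c Ic; first by case: (body 0 c Ic) => [//|[]].
case: (body _ c Ic) => [Qc|[i' [<-] Ic']]; first by apply: reaches_mono Qc => //; lia.
by rewrite mulSn -addnA; apply: reaches_seq Ic' _ => c'; apply: IHi.
Qed.

Lemma run_exec t c c' : exec t c = Some c' -> step P c' = None -> run P t.+1 c = Some c'.
Proof.
elim: t c => [|t IHt] c /=; first by move=> [<-] ->.
by case: (step P c) => // c1 /IHt.
Qed.

End Execution.

Lemma upd_eq m a v x : x = a -> upd m a v x = v.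
Proof. by move=> ->; rewrite /upd Z.eqb_refl. Qed.

Lemma upd_ne m a v x : x <> a -> upd m a v x = m x.
Proof. by move=> xa; rewrite /upd; case: Z.eqb_spec. Qed.

Lemma touch_nil_le us S : us <= S -> touch us [::] <= S.
Proof. by []. Qed.

Lemma touch_cons_le us a l S : sz a <= S -> touch us l <= S -> touch us (a :: l) <= S.
Proof. by rewrite /touch /= geq_max => ->. Qed.

(* Registers 3, 4, 5 hold k, n, |u|; register 6 is the outer loop index (e, d or m), 7 the
   inner one (z or j), 8 the accumulator and 9 holds min(m, |u|).  Four tables are interleaved
   at negative addresses, entry i of table t being at [slot t i]: the letters of u (t = -4),
   the powers k^i (t = -5), the values lcp u (drop i u) (t = -6) and U i (t = -7). *)
Definition slot (off : Z) (i : nat) : Z := (-4 * Z.of_nat i + off)%Z.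

Definition bordered_counter : program := [::
  (* k is parked at address |u| + 3n, past the input, to free register 0; then k, n, |u| are
     saved at addresses -2, -1, -3. *)
  IAdd 2 2 1; IAdd 2 2 1; IAdd 2 2 1; IStore 2 0;
  IConst 0 (-1); IStore 0 1; ILoad 1 2; IConst 0 (-2); IStore 0 1;
  IConst 0 (-1); ILoad 1 0; ISub 2 2 1; ISub 2 2 1; ISub 2 2 1;
  IConst 0 (-3); IStore 0 2;
  (* 16: copy u_i from register 3 + i to its slot, for i = |u| - 1 downto 0 *)
  IJz 2 27;
  IConst 1 1; ISub 2 2 1; IConst 0 (-4); IMul 1 0 2; IAdd 1 1 0;
  IConst 0 3; IAdd 0 0 2; ILoad 0 0; IStore 1 0; IJmp 16;
  (* 27 *) IConst 0 (-2); ILoad 3 0; IConst 0 (-1); ILoad 4 0; IConst 0 (-3); ILoad 5 0;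
  IConst 6 0; IConst 8 1;
  (* 35: tabulate k^e for e = 0 .. n *)
  IConst 11 (-4); IMul 10 11 6; IConst 11 (-5); IAdd 10 10 11; IStore 10 8;
  IJlt 6 4 42; IJmp 46;
  (* 42 *) IMul 8 8 3; IConst 11 1; IAdd 6 6 11; IJmp 35;
  (* 46 *) IConst 6 1;
  (* 47: tabulate lcp u (drop d u) for d = 1 .. |u| - 1, by letterwise comparison *)
  IJlt 6 5 49; IJmp 77;
  (* 49 *) IConst 7 0;
  (* 50 *) IAdd 10 6 7; IJlt 10 5 53; IJmp 69;
  (* 53 *) IConst 12 (-4); IMul 11 12 7; IConst 12 (-4); IAdd 11 11 12; ILoad 11 11;
  IConst 0 (-4); IMul 12 0 10; IConst 0 (-4); IAdd 12 12 0; ILoad 12 12;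
  ISub 11 11 12; IJz 11 66; IJmp 69;
  (* 66 *) IConst 11 1; IAdd 7 7 11; IJmp 50;
  (* 69 *) IConst 11 (-4); IMul 10 11 6; IConst 11 (-6); IAdd 10 10 11; IStore 10 7;
  IConst 11 1; IAdd 6 6 11; IJmp 47;
  (* 77 *) IConst 6 1;
  (* 78: for m = 1 .. n, accumulate nshortest_border m j over j, then tabulate U m *)
  IConst 0 0; IJlt 6 5 82; IAdd 9 5 0; IJmp 83;
  (* 82 *) IAdd 9 6 0;
  (* 83 *) IConst 8 0; IConst 7 1;
  (* 85 *) IAdd 10 7 7; IJlt 6 10 124;
  IConst 12 (-4); IMul 11 12 7; IConst 12 (-7); IAdd 11 11 12; ILoad 11 11;
  IJlt 7 9 102;
  ISub 12 6 10; IConst 0 (-4); IMul 12 0 12; IConst 0 (-5); IAdd 12 12 0; ILoad 12 12;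
  IMul 11 11 12; IAdd 8 8 11; IJmp 121;
  (* 102 *) ISub 12 6 7; IJlt 12 9 113;
  ISub 12 12 9; IConst 0 (-4); IMul 12 0 12; IConst 0 (-5); IAdd 12 12 0; ILoad 12 12;
  IMul 11 11 12; IAdd 8 8 11; IJmp 121;
  (* 113 *) IConst 0 (-4); IMul 10 0 12; IConst 0 (-6); IAdd 10 10 0; ILoad 10 10;
  ISub 12 9 12; IJlt 10 12 121; IAdd 8 8 11;
  (* 121 *) IConst 0 1; IAdd 7 7 0; IJmp 85;
  (* 124 *) ISub 10 6 9; IConst 0 (-4); IMul 10 0 10; IConst 0 (-5); IAdd 10 10 0;
  ILoad 10 10; ISub 10 10 8; IConst 0 (-4); IMul 11 0 6; IConst 0 (-7); IAdd 11 11 0;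
  IStore 11 10; IJlt 6 4 138; IJmp 141;
  (* 138 *) IConst 0 1; IAdd 6 6 0; IJmp 78;
  (* 141 *) IConst 1 0; IAdd 0 8 1; IHalt].

Definition at_pc pc (R : (Z -> Z) -> nat -> Prop) (c : config) :=
  cpc c = pc /\ R (cmem c) (cused c).

Arguments touch : simpl never.
Arguments upd : simpl never.

Ltac simpl_upd := repeat match goal with |- context [upd ?m ?a ?v ?x] =>
  first [ rewrite (@upd_eq m a v x); [|reflexivity] | rewrite (@upd_ne m a v x); [|discriminate]
        | rewrite (@upd_eq m a v x); [|unfold slot; lia]
        | rewrite (@upd_ne m a v x); [|unfold slot; lia] ] end.

Ltac rewrite_regs M := repeat match goal with H : M ?a = _ |- context [M ?a] => rewrite H end.

Ltac exec_step M := eapply reaches_step; [reflexivity|];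
  cbn -[Z.add Z.sub Z.mul Z.div Z.modulo Z.eqb Z.ltb Z.succ upd touch];
  simpl_upd; rewrite_regs M.

Ltac branch := match goal with
  | |- context [if Z.ltb ?a ?b then _ else _] => destruct (Z.ltb_spec a b)
  | |- context [if Z.eqb ?a ?b then _ else _] => destruct (Z.eqb_spec a b) end.

Ltac read_table M a H := match goal with |- context [M ?x] =>
  let E := fresh in assert (E : x = a) by (unfold slot; lia); rewrite E H; clear E end.

Ltac split_inv := repeat lazymatch goal with
  | |- _ = _ => fail
  | |- forall _, _ => fail
  | |- _ => constructor end.

Ltac frame := let i := fresh "i" in let Hi := fresh "Hi" in
  move=> i Hi; simpl_upd;
  match goal with H : forall _, _ -> ?M _ = _ |- _ => apply: H; lia end.

Ltac space_ok := match goal with |- is_true (leq (touch _ _) _) =>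
  repeat first [apply: touch_cons_le | apply: touch_nil_le]; unfold sz, slot; lia end.

Ltac conclude M := split; [reflexivity|]; cbn [cmem cused]; split_inv; simpl_upd; rewrite_regs M;
  try lia; try frame; try space_ok.

Section BorderedCounter.
Variables (k n : nat) (u : seq nat).
Hypotheses (n_gt0 : 0 < n) (k_gt1 : 1 < k) (un : size u <= n) (ku : word_over k u).
Local Notation L := (size u).
Local Notation mem_bound := (4 * n + 40).

Local Notation u_table M := (forall j, j < L -> M (slot (-4) j) = Z.of_nat (nth 0 u j)).
Local Notation pow_table e M := (forall i, i < e -> M (slot (-5) i) = Z.of_nat (k ^ i)).
Local Notation lcp_table d M :=
  (forall d', 0 < d' < d -> M (slot (-6) d') = Z.of_nat (lcp u (drop d' u))).
Local Notation U_table m M := (forall j, 0 < j < m -> M (slot (-7) j) = Z.of_nat (U k u j)).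

Inductive copy_inv (i : nat) (M : Z -> Z) (us : nat) : Prop :=
  CopyInv of M 2%Z = Z.of_nat i & i <= L
    & M (-1)%Z = Z.of_nat n & M (-2)%Z = Z.of_nat k & M (-3)%Z = Z.of_nat L
    & (forall j, j < i -> M (3 + Z.of_nat j)%Z = Z.of_nat (nth 0 u j))
    & (forall j, i <= j < L -> M (slot (-4) j) = Z.of_nat (nth 0 u j))
    & us <= mem_bound.

Lemma init_mem_input j : j < L -> init_mem k n u (3 + Z.of_nat j) = Z.of_nat (nth 0 u j).
Proof.
move=> jL; rewrite /init_mem.
have /Z.eqb_neq -> : (3 + Z.of_nat j <> 0)%Z by lia.
have /Z.eqb_neq -> : (3 + Z.of_nat j <> 1)%Z by lia.
have /Z.eqb_neq -> : (3 + Z.of_nat j <> 2)%Z by lia.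
have /Z.leb_le -> : (3 <= 3 + Z.of_nat j)%Z by lia.
have /Z.ltb_lt -> : (3 + Z.of_nat j < 3 + Z.of_nat L)%Z by lia.
by rewrite (_ : (3 + Z.of_nat j - 3)%Z = Z.of_nat j) ?Nat2Z.id //; lia.
Qed.

Lemma prologue : reaches bordered_counter (init_config k n u) 16 (at_pc 16 (copy_inv L)).
Proof.
rewrite /init_config; set M := init_mem k n u.
have M0 : M 0%Z = Z.of_nat k by [].
have M1 : M 1%Z = Z.of_nat n by [].
have M2 : M 2%Z = Z.of_nat L by [].
do 16 exec_step M.
apply: reaches_now; conclude M.
by move=> j jL; simpl_upd; apply: init_mem_input.
Qed.

Lemma copy_iter i M us : copy_inv i.+1 M us ->
  reaches bordered_counter (Config 16 M us) 11 (at_pc 16 (copy_inv i)).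
Proof.
case; rewrite Nat2Z.inj_succ => Mi iL Mn Mk ML inp tab usS.
exec_step M; branch; first lia.
do 8 exec_step M.
read_table M (3 + Z.of_nat i)%Z inp; last lia.
do 2 exec_step M.
apply: reaches_now; conclude M.
move=> j ij; case: (eqVneq j i) => [->|ji]; simpl_upd; [done | apply: tab; lia].
Qed.

Inductive pow_inv (e : nat) (M : Z -> Z) (us : nat) : Prop :=
  PowInv of M 3%Z = Z.of_nat k & M 4%Z = Z.of_nat n & M 5%Z = Z.of_nat L
    & M 6%Z = Z.of_nat e & M 8%Z = Z.of_nat (k ^ e) & e <= n
    & u_table M & pow_table e M & us <= mem_bound.

Lemma copy_done M us : copy_inv 0 M us ->
  reaches bordered_counter (Config 16 M us) 9 (at_pc 35 (pow_inv 0)).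
Proof.
case=> Mi _ Mn Mk ML _ tab usS.
exec_step M; branch; last lia.
do 8 exec_step M.
by apply: reaches_now; conclude M.
Qed.

Lemma pow_iter e M us : pow_inv e M us -> e < n ->
  reaches bordered_counter (Config 35 M us) 10 (at_pc 35 (pow_inv e.+1)).
Proof.
case=> M3 M4 M5 M6 M8 en utab ptab usS en'.
do 6 exec_step M; branch; last lia.
do 4 exec_step M.
apply: reaches_now; conclude M.
- by rewrite expnS Nat2Z.inj_mul; lia.
- by move=> i ie; case: (eqVneq i e) => [->|ie']; simpl_upd => //; apply: ptab; lia.
Qed.

Inductive lcp_outer_inv (d : nat) (M : Z -> Z) (us : nat) : Prop :=
  LcpOuterInv of M 3%Z = Z.of_nat k & M 4%Z = Z.of_nat n & M 5%Z = Z.of_nat L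
    & M 6%Z = Z.of_nat d & 0 < d <= maxn 1 L
    & u_table M & pow_table n.+1 M & lcp_table d M & us <= mem_bound.

Lemma pow_done M us : pow_inv n M us ->
  reaches bordered_counter (Config 35 M us) 8 (at_pc 47 (lcp_outer_inv 1)).
Proof.
case=> M3 M4 M5 M6 M8 _ utab ptab usS.
do 6 exec_step M; branch; first lia.
do 2 exec_step M.
apply: reaches_now; conclude M.
by move=> i ie; case: (eqVneq i n) => [->|ie']; simpl_upd => //; apply: ptab; lia.
Qed.

Inductive lcp_inner_inv (d z : nat) (M : Z -> Z) (us : nat) : Prop :=
  LcpInnerInv of lcp_outer_inv d M us & d < L & M 7%Z = Z.of_nat z & d + z <= L
    & z <= lcp u (drop d u).

Lemma lcp_outer_iter d M us : lcp_outer_inv d M us -> d < L ->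
  reaches bordered_counter (Config 47 M us) 2 (at_pc 50 (lcp_inner_inv d 0)).
Proof.
case=> M3 M4 M5 M6 d_range utab ptab ltab usS dL.
exec_step M; branch; last lia.
exec_step M.
by apply: reaches_now; conclude M.
Qed.

Lemma lcp_inner_iter d z M us : lcp_inner_inv d z M us -> d + z < L ->
  nth 0 u z = nth 0 u (d + z) ->
  reaches bordered_counter (Config 50 M us) 17 (at_pc 50 (lcp_inner_inv d z.+1)).
Proof.
case=> [[M3 M4 M5 M6 d_range utab ptab ltab usS] dL M7 dzL zlcp] dzL' uz.
do 2 exec_step M; branch; last lia.
do 5 exec_step M; read_table M (slot (-4) z) utab; last lia.
do 5 exec_step M; read_table M (slot (-4) (d + z)) utab; last lia.
do 2 exec_step M; branch; last lia.
do 3 exec_step M.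
apply: reaches_now; conclude M.
by rewrite ltn_lcp ?size_drop ?nth_drop ?uz //; lia.
Qed.

Lemma lcp_inner_done d z M us : lcp_inner_inv d z M us -> L <= d + z ->
  reaches bordered_counter (Config 50 M us) 11 (at_pc 47 (lcp_outer_inv d.+1)).
Proof.
case=> [[M3 M4 M5 M6 d_range utab ptab ltab usS] dL M7 dzL zlcp] dzL'.
do 2 exec_step M; branch; first lia.
do 9 exec_step M.
apply: reaches_now; conclude M.
move=> d' d'_range; case: (eqVneq d' d) => [->|d'd]; simpl_upd; last by apply: ltab; lia.
by have := lcp_leq_size u (drop d u); rewrite size_drop; lia.
Qed.

Lemma lcp_inner_mismatch d z M us : lcp_inner_inv d z M us -> d + z < L ->
  nth 0 u z <> nth 0 u (d + z) ->
  reaches bordered_counter (Config 50 M us) 23 (at_pc 47 (lcp_outer_inv d.+1)).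
Proof.
case=> [[M3 M4 M5 M6 d_range utab ptab ltab usS] dL M7 dzL zlcp] dzL' uz.
do 2 exec_step M; branch; last lia.
do 5 exec_step M; read_table M (slot (-4) z) utab; last lia.
do 5 exec_step M; read_table M (slot (-4) (d + z)) utab; last lia.
do 2 exec_step M; branch; first lia.
do 9 exec_step M.
apply: reaches_now; conclude M.
move=> d' d'_range; case: (eqVneq d' d) => [->|d'd]; simpl_upd; last by apply: ltab; lia.
have : ~~ (z < lcp u (drop d u)) by rewrite ltn_lcp ?size_drop ?nth_drop; try apply/eqP; lia.
by lia.
Qed.

Inductive main_inv (m : nat) (M : Z -> Z) (us : nat) : Prop :=
  MainInv of M 3%Z = Z.of_nat k & M 4%Z = Z.of_nat n & M 5%Z = Z.of_nat L
    & M 6%Z = Z.of_nat m & 0 < m <= n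
    & u_table M & pow_table n.+1 M & lcp_table L M & U_table m M & us <= mem_bound.

Lemma lcp_outer_done d M us : lcp_outer_inv d M us -> L <= d ->
  reaches bordered_counter (Config 47 M us) 3 (at_pc 78 (main_inv 1)).
Proof.
case=> M3 M4 M5 M6 d_range utab ptab ltab usS Ld.
exec_step M; branch; first lia.
do 2 exec_step M.
by apply: reaches_now; conclude M.
Qed.

Inductive sum_inv (m j : nat) (M : Z -> Z) (us : nat) : Prop :=
  SumInv of main_inv m M us & M 9%Z = Z.of_nat (minn m L) & M 7%Z = Z.of_nat j
    & 0 < j <= m./2.+1 & M 8%Z = Z.of_nat (\sum_(1 <= i < j) nshortest_border k u m i).

Lemma sum_start m M us : main_inv m M us ->
  reaches bordered_counter (Config 78 M us) 6 (at_pc 85 (sum_inv m 1)).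
Proof.
case=> M3 M4 M5 M6 m_range utab ptab ltab Utab usS.
do 2 exec_step M; branch; [do 3 exec_step M | do 4 exec_step M];
  by apply: reaches_now; conclude M; rewrite big_geq.
Qed.

Lemma sum_iter m j M us : sum_inv m j M us -> 2 * j <= m ->
  reaches bordered_counter (Config 85 M us) 22 (at_pc 85 (sum_inv m j.+1)).
Proof.
case=> [[M3 M4 M5 M6 m_range utab ptab ltab Utab usS] M9 M7 j_range M8] jm.
do 2 exec_step M; branch; first lia.
do 5 exec_step M; read_table M (slot (-7) j) Utab; last lia.
have sumS F : \sum_(1 <= i < j.+1) F i = \sum_(1 <= i < j) F i + F j :> nat.
  by rewrite big_nat_recr //=; lia.
exec_step M; branch.
- do 2 exec_step M; branch.
  + do 5 exec_step M; read_table M (slot (-6) (m - j)) ltab; last lia.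
    do 2 exec_step M; branch; [do 3 exec_step M | do 4 exec_step M];
      apply: reaches_now; conclude M;
      rewrite sumS /nshortest_border /= !ifN -?ltnNge; try lia;
      by case: leqP; lia.
  + do 6 exec_step M; read_table M (slot (-5) (m - j - minn m L)) ptab; last lia.
    do 6 exec_step M.
    apply: reaches_now; conclude M.
    by rewrite sumS /nshortest_border /= ifN -?ltnNge ?ifT; lia.
- do 6 exec_step M; read_table M (slot (-5) (m - 2 * j)) ptab; last lia.
  do 6 exec_step M.
  apply: reaches_now; conclude M.
  by rewrite sumS /nshortest_border /= ifT; lia.
Qed.

Inductive final_inv (M : Z -> Z) (us : nat) : Prop :=
  FinalInv of M 0%Z = Z.of_nat (B k u n) & us <= mem_bound.

Lemma sum_done m j M us : sum_inv m j M us -> m < 2 * j ->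
  reaches bordered_counter (Config 85 M us) 18
    (fun c => m < n /\ at_pc 78 (main_inv m.+1) c \/ m = n /\ at_pc 143 final_inv c).
Proof.
case=> [[M3 M4 M5 M6 m_range utab ptab ltab Utab usS] M9 M7 j_range M8] mj.
have {j_range mj} j_half : j = m./2.+1 by lia.
subst j.
rewrite -nbordered_take_rec // in M8.
have BU := nbordered_take_add_U ku m.
do 2 exec_step M; branch; last lia.
do 6 exec_step M; read_table M (slot (-5) (m - minn m L)) ptab; last lia.
do 7 exec_step M; branch.
- do 3 exec_step M; apply: reaches_now; left; split; first lia.
  conclude M.
  move=> i i_range; case: (eqVneq i m) => [->|im]; simpl_upd; last by apply: Utab; lia.
  by lia.
- do 3 exec_step M; apply: reaches_now; right; split; first lia.
  conclude M.
  have -> : m = n by lia.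
  by rewrite B_nbordered ?take_oversize //; lia.
Qed.

Lemma at_pcE pc R c : at_pc pc R c -> exists M us, c = Config pc M us /\ R M us.
Proof. by case: c => pc' M us [/= -> Rc]; exists M, us. Qed.

Lemma copy_loop :
  reaches bordered_counter (init_config k n u) (16 + (L * 11 + 9)) (at_pc 35 (pow_inv 0)).
Proof.
apply: reaches_seq prologue _ => c.
apply: (@reaches_loop _ (fun i => at_pc 16 (copy_inv i))) => -[|i] c' /at_pcE[M [us [-> inv]]].
  by left; apply: copy_done.
by right; exists i => //; apply: copy_iter.
Qed.

Lemma pow_loop c : at_pc 35 (pow_inv 0) c ->
  reaches bordered_counter c (n * 10 + 8) (at_pc 47 (lcp_outer_inv 1)).
Proof.
move=> inv; apply: (@reaches_loop _ (fun i c => i <= n /\ at_pc 35 (pow_inv (n - i)) c));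
  last by rewrite subnn.
move=> [|i] c' [i_le /at_pcE[M [us [-> {}inv]]]].
  by left; apply: pow_done; rewrite subn0 in inv.
right; exists i => //; have ni : (n - i.+1).+1 = n - i by lia.
apply: reaches_mono (pow_iter inv _) => [//|c2|]; last lia.
by rewrite ni; split => //; lia.
Qed.

Lemma lcp_inner_loop d c : d < L -> at_pc 50 (lcp_inner_inv d 0) c ->
  reaches bordered_counter c (n * 17 + 23) (at_pc 47 (lcp_outer_inv d.+1)).
Proof.
move=> dL inv; apply: (@reaches_le _ _ ((L - d - 0) * 17 + 23)); first lia.
apply: (@reaches_loop _ (fun i c => exists2 z, i = L - d - z & at_pc 50 (lcp_inner_inv d z) c));
  last by exists 0.
move=> i c' [z -> /at_pcE[M [us [-> {}inv]]]].
have [_ _ _ dzL _] := inv.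
case: (leqP L (d + z)) => [Ldz|dzL'].
  by left; apply: reaches_mono (lcp_inner_done inv Ldz).
case: (eqVneq (nth 0 u z) (nth 0 u (d + z))) => [uz|/eqP uz].
  right; exists (L - d - z.+1); first lia.
  by apply: reaches_mono (lcp_inner_iter inv dzL' uz) => // c2; exists z.+1.
by left; apply: lcp_inner_mismatch inv dzL' uz.
Qed.

Lemma lcp_outer_loop c : at_pc 47 (lcp_outer_inv 1) c ->
  reaches bordered_counter c ((maxn 1 L - 1) * (2 + (n * 17 + 23)) + 3) (at_pc 78 (main_inv 1)).
Proof.
move=> inv.
apply: (@reaches_loop _ (fun i c => exists2 d, i = maxn 1 L - d & at_pc 47 (lcp_outer_inv d) c));
  last by exists 1.
move=> i c' [d -> /at_pcE[M [us [-> {}inv]]]].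
have [_ _ _ _ d_range _ _ _ _] := inv.
case: (leqP L d) => [Ld|dL]; first by left; apply: lcp_outer_done inv Ld.
right; exists (maxn 1 L - d.+1); first lia.
apply: reaches_seq (lcp_outer_iter inv dL) _ => c2 /(lcp_inner_loop dL).
by apply: reaches_mono => // c3; exists d.+1.
Qed.

Lemma sum_loop m c : at_pc 78 (main_inv m) c ->
  reaches bordered_counter c (6 + (n * 22 + 18))
    (fun c => m < n /\ at_pc 78 (main_inv m.+1) c \/ m = n /\ at_pc 143 final_inv c).
Proof.
move=> /at_pcE[M [us [-> inv]]]; have [_ _ _ _ m_range _ _ _ _ _] := inv.
apply: reaches_seq (sum_start inv) _ => c' inv1.
apply: (@reaches_le _ _ ((m./2.+1 - 1) * 22 + 18)); first lia.
apply: (@reaches_loop _ (fun i c => exists2 j, i = m./2.+1 - j & at_pc 85 (sum_inv m j) c));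
  last by exists 1.
move=> i c2 [j -> /at_pcE[M' [us' [-> {}inv]]]].
have [_ _ _ j_range _] := inv.
case: (leqP (2 * j) m) => [jm|mj]; last by left; apply: sum_done inv mj.
right; exists (m./2.+1 - j.+1); first lia.
by apply: reaches_mono (sum_iter inv jm) => // c3; exists j.+1.
Qed.

Lemma main_loop c : at_pc 78 (main_inv 1) c ->
  reaches bordered_counter c ((n - 1) * (6 + (n * 22 + 18)) + (6 + (n * 22 + 18)))
    (at_pc 143 final_inv).
Proof.
move=> inv.
apply: (@reaches_loop _ (fun i c => exists2 m, i = n - m & at_pc 78 (main_inv m) c));
  last by exists 1.
move=> i c' [m -> inv']; have [_ [_ _ _ _ m_range _ _ _ _ _]] := inv'.
case: (ltnP m n) => [mn|nm].
  right; exists (n - m.+1); first lia.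
  by apply: reaches_mono (sum_loop inv') => // c2 [[_ ?]|[? _]]; [exists m.+1 | lia].
by left; apply: reaches_mono (sum_loop inv') => // c2 [[? _]|[_ ?]] //; lia.
Qed.

Lemma bordered_counter_reaches :
  reaches bordered_counter (init_config k n u) (199 * (n * n)) (at_pc 143 final_inv).
Proof.
apply: reaches_le (reaches_seq copy_loop (fun _ inv1 => reaches_seq (pow_loop inv1)
  (fun _ inv2 => reaches_seq (lcp_outer_loop inv2) (fun _ inv3 => main_loop inv3)))).
have : (maxn 1 L - 1) * (2 + (n * 17 + 23)) <= n * (n * 17 + 25) by apply: leq_mul; lia.
have : (n - 1) * (6 + (n * 22 + 18)) <= n * (n * 22 + 24) by apply: leq_mul; lia.
nia.
Qed.

End BorderedCounter.

Theorem theorem6 :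
  exists (P : program) (C : nat),
    forall (k n : nat) (u : seq nat),
      1 <= n -> 2 <= k -> size u <= n ->
      all (fun a => (1 <= a) && (a <= k)) u ->
      exists (t : nat) (c : config),
        [/\ t <= C * (n * n),
            run P t (init_config k n u) = Some c,
            cused c <= C * n &
            cmem c 0%Z = Z.of_nat (B k u n)].
Proof.
exists bordered_counter, 200 => k n u n_gt0 k_gt1 un ku.
have [t [c [tn ex [pc [Bc usS]]]]] := bordered_counter_reaches n_gt0 k_gt1 un ku.
exists t.+1, c; split => //; try lia.
by apply: run_exec ex _; move: pc; case: c {Bc usS} => pc M us /= ->.
Qed.
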